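(* The connective $\to$ is not definable in $\textsf{INQ}^-$: there is no formula $\varphi(a,b)$ of $\textsf{INQ}^-$ such that for all formulas $\eta,\theta$ of $\textsf{INQ}^-$, $\varphi(\eta,\theta)\equiv\eta\to\theta$ (where $\varphi(\eta,\theta)$ is obtained by replacing each occurrence of $a$ with $\eta$ and each occurrence of $b$ with $\theta$).
   Context: $\textsf{INQ}^-$ is the propositional language built from countably many propositional letters using $\bot,\top$, unary $\neg,?$ and binary $\land$, $\vee$ (inquisitive disjunction), $\otimes$ (tensor); it does not contain $\to$. A model is $M=(W,V)$ with $V$ assigning to each world a set of letters. Support at $s\subseteq W$: $s\models p$ iff $p\in V(w)$ for all $w\in s$; $s\models\bot$ iff $s=\emptyset$; $s\models\top$ always; $s\models\psi\land\chi$ iff both; $s\models\psi\vee\chi$ iff $s\models\psi$ or $s\models\chi$; $s\models\psi\otimes\chi$ iff $s=t_1\cup t_2$ for some $t_1\models\psi$, $t_2\models\chi$; $s\models\psi\to\chi$ iff for all $t\subseteq s$, $t\models\psi$ implies $t\models\chi$; $s\models\neg\psi$ iff $s\models\psi\to\bot$; $s\models?\psi$ iff $s\models\psi$ or $s\models\neg\psi$. $\psi\equiv\chi$ means that in every model, $\psi$ and $\chi$ are supported by the same states. *)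

From Stdlib Require Import Arith.

Inductive form : Type :=
| Var : nat -> form
| Bot : form
| Top : form
| Neg : form -> form
| Quest : form -> form
| And : form -> form -> form
| Or : form -> form -> form
| Tensor : form -> form -> form.

Record model := { W : Type; V : W -> nat -> Prop }.

Definition state (M : model) := W M -> Prop.
Definition subst_of {M : model} (t s : state M) : Prop := forall w, t w -> s w.
Definition is_empty {M : model} (s : state M) : Prop := forall w, ~ s w.
Definition is_union {M : model} (s t1 t2 : state M) : Prop :=
  forall w, s w <-> (t1 w \/ t2 w).

Fixpoint supp (M : model) (s : state M) (f : form) : Prop :=
  match f with
  | Var p => forall w, s w -> V M w p
  | Bot => is_empty s
  | Top => True
  | Neg g => forall t : state M, subst_of t s -> supp M t g -> is_empty t
  | Quest g => supp M s g \/
               (forall t : state M, subst_of t s -> supp M t g -> is_empty t)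
  | And g h => supp M s g /\ supp M s h
  | Or g h => supp M s g \/ supp M s h
  | Tensor g h => exists t1 t2 : state M,
                    is_union s t1 t2 /\ supp M t1 g /\ supp M t2 h
  end.

(* Support of the implication eta -> theta (a connective of full INQ,
   not of INQ^-). *)
Definition supp_imp (M : model) (s : state M) (eta theta : form) : Prop :=
  forall t : state M, subst_of t s -> supp M t eta -> supp M t theta.

Fixpoint subst2 (a b : nat) (eta theta : form) (f : form) : form :=
  match f with
  | Var p => if Nat.eqb p a then eta else if Nat.eqb p b then theta else Var p
  | Bot => Bot
  | Top => Top
  | Neg g => Neg (subst2 a b eta theta g)
  | Quest g => Quest (subst2 a b eta theta g)
  | And g h => And (subst2 a b eta theta g) (subst2 a b eta theta h)
  | Or g h => Or (subst2 a b eta theta g) (subst2 a b eta theta h)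
  | Tensor g h => Tensor (subst2 a b eta theta g) (subst2 a b eta theta h)
  end.

Fixpoint letters_in (a b : nat) (f : form) : Prop :=
  match f with
  | Var p => p = a \/ p = b
  | Bot | Top => True
  | Neg g | Quest g => letters_in a b g
  | And g h | Or g h | Tensor g h => letters_in a b g /\ letters_in a b h
  end.

From Stdlib Require Import Arith Lia.

(** INQ^- formulas in the letters [a], [b] are interpreted compositionally,
    so it suffices to find one model, formulas [eta], [theta] and a class of
    support properties that contains those of [eta] and [theta], is closed
    under every INQ^- connective, and misses [eta -> theta].  On three
    worlds with valuations {p, q}, {p}, {q, r} (letters 0, 1, 2), take
    [eta = p \/ q] and [theta = p \/ r].  The class {every state, [eta],
    [theta], only the empty state} is a chain ([theta] entails [eta]), hence
    closed under conjunction and disjunction; the negation of a property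
    holding at all singletons holds only at the empty state; and two
    nontrivial members tensor to the trivial property, since every state
    splits into a part avoiding the third world (supporting p) and a part
    inside it (supporting q and r).  Yet the state of the last two worlds
    supports [eta -> theta] without supporting [eta], and the full state
    does not support [eta -> theta]. *)

Section SupportProperties.

Variable M : model.

Definition same_support (P Q : state M -> Prop) : Prop := forall s, P s <-> Q s.

Definition persistent (P : state M -> Prop) : Prop :=
  forall s t, subst_of t s -> P s -> P t.

Definition neg_prop (P : state M -> Prop) (s : state M) : Prop :=
  forall t, subst_of t s -> P t -> is_empty t.

Definition tensor_prop (P Q : state M -> Prop) (s : state M) : Prop :=
  exists t1 t2, is_union s t1 t2 /\ P t1 /\ Q t2.

Lemma neg_prop_persistent (P : state M -> Prop) : persistent (neg_prop P).
Proof.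
  intros s t Hts Hs u Hut; apply Hs; intros w Hw; apply Hts, Hut, Hw.
Qed.

Lemma supp_persistent (f : form) : persistent (fun s => supp M s f).
Proof.
  induction f as [p| | |g _|g IHg|g IHg h IHh|g IHg h IHh|g IHg h IHh];
    intros s t Hts; simpl.
  - intros Hs w Hw; exact (Hs w (Hts w Hw)).
  - intros Hs w Hw; exact (Hs w (Hts w Hw)).
  - trivial.
  - apply (neg_prop_persistent _ s t Hts).
  - intros [Hs|Hs]; [left; exact (IHg s t Hts Hs)|right].
    exact (neg_prop_persistent _ s t Hts Hs).
  - intros [Hg Hh]; split; [apply (IHg s)|apply (IHh s)]; assumption.
  - intros [Hg|Hh]; [left; apply (IHg s)|right; apply (IHh s)]; assumption.
  - intros (t1 & t2 & Hu & H1 & H2).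
    exists (fun w => t w /\ t1 w), (fun w => t w /\ t2 w); split; [|split].
    + intros w; split; [|tauto].
      intros Hw; destruct (proj1 (Hu w) (Hts w Hw)); tauto.
    + apply (IHg t1); [intros w [_ Hw]; exact Hw|exact H1].
    + apply (IHh t2); [intros w [_ Hw]; exact Hw|exact H2].
Qed.

Lemma neg_prop_same_support (P Q : state M -> Prop) :
  same_support P Q -> same_support (neg_prop P) (neg_prop Q).
Proof.
  intros HPQ s; split; intros Hs t Hts Ht; apply Hs; auto; apply HPQ; exact Ht.
Qed.

Lemma tensor_prop_same_support (P P' Q Q' : state M -> Prop) :
  same_support P P' -> same_support Q Q' ->
  same_support (tensor_prop P Q) (tensor_prop P' Q').
Proof.
  intros HP HQ s; split; intros (t1 & t2 & Hu & H1 & H2); exists t1, t2;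
    (split; [exact Hu|split; [apply HP|apply HQ]; assumption]).
Qed.

Lemma neg_prop_empty : same_support (neg_prop is_empty) (fun _ => True).
Proof. intros s; split; [trivial|intros _ t _ Ht; exact Ht]. Qed.

Lemma neg_prop_of_singletons (P : state M -> Prop) :
  (forall w, P (fun x => x = w)) -> same_support (neg_prop P) is_empty.
Proof.
  intros HP s; split.
  - intros Hs w Hw.
    refine (Hs (fun x => x = w) _ (HP w) w eq_refl); intros x ->; exact Hw.
  - intros Hs t Hts _ w Hw; exact (Hs w (Hts w Hw)).
Qed.

Lemma tensor_prop_empty_l (P : state M -> Prop) :
  persistent P -> same_support (tensor_prop is_empty P) P.
Proof.
  intros HP s; split.
  - intros (t1 & t2 & Hu & H1 & H2); apply (HP t2); [|exact H2].
    intros w Hw; destruct (proj1 (Hu w) Hw) as [H|H]; [destruct (H1 w H)|exact H].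
  - intros Hs; exists (fun _ => False), s; split; [|split].
    + intros w; tauto.
    + intros w Hw; exact Hw.
    + exact Hs.
Qed.

Lemma tensor_prop_comm (P Q : state M -> Prop) :
  same_support (tensor_prop P Q) (tensor_prop Q P).
Proof.
  intros s; split; intros (t1 & t2 & Hu & H1 & H2); exists t2, t1;
    (split; [intros w; rewrite (Hu w); tauto|split; assumption]).
Qed.

Lemma tensor_prop_cover (X Y : state M) (P Q : state M -> Prop) :
  (forall w, X w \/ Y w) ->
  (forall t, subst_of t X -> P t) -> (forall t, subst_of t Y -> Q t) ->
  same_support (tensor_prop P Q) (fun _ => True).
Proof.
  intros Hcover HX HY s; split; [trivial|intros _].
  exists (fun w => s w /\ X w), (fun w => s w /\ Y w); split; [|split].
  - intros w; destruct (Hcover w); tauto.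
  - apply HX; intros w [_ Hw]; exact Hw.
  - apply HY; intros w [_ Hw]; exact Hw.
Qed.

Section Chains.

Variable C : (state M -> Prop) -> Prop.
Hypothesis C_same_support : forall P Q, same_support P Q -> C P -> C Q.
Hypothesis C_total : forall P Q, C P -> C Q ->
  (forall s, P s -> Q s) \/ (forall s, Q s -> P s).

Lemma chain_closed_and (P Q : state M -> Prop) :
  C P -> C Q -> C (fun s => P s /\ Q s).
Proof.
  intros HP HQ; destruct (C_total P Q HP HQ) as [H|H];
    [apply (C_same_support P)|apply (C_same_support Q)];
    auto; intros s; split; firstorder.
Qed.

Lemma chain_closed_or (P Q : state M -> Prop) :
  C P -> C Q -> C (fun s => P s \/ Q s).
Proof.
  intros HP HQ; destruct (C_total P Q HP HQ) as [H|H];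
    [apply (C_same_support Q)|apply (C_same_support P)];
    auto; intros s; split; firstorder.
Qed.

End Chains.

Section Substitution.

Variables (a b : nat) (eta theta : form).
Hypothesis a_neq_b : a <> b.
Variable C : (state M -> Prop) -> Prop.
Hypothesis C_eta : C (fun s => supp M s eta).
Hypothesis C_theta : C (fun s => supp M s theta).
Hypothesis C_bot : C is_empty.
Hypothesis C_top : C (fun _ => True).
Hypothesis C_neg : forall P, C P -> C (neg_prop P).
Hypothesis C_and : forall P Q, C P -> C Q -> C (fun s => P s /\ Q s).
Hypothesis C_or : forall P Q, C P -> C Q -> C (fun s => P s \/ Q s).
Hypothesis C_tensor : forall P Q, C P -> C Q -> C (tensor_prop P Q).

Lemma supp_subst2_closed (phi : form) :
  letters_in a b phi -> C (fun s => supp M s (subst2 a b eta theta phi)).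
Proof.
  induction phi as [p| | |g IHg|g IHg|g IHg h IHh|g IHg h IHh|g IHg h IHh];
    simpl; intros Hl.
  - destruct Hl as [->| ->]; rewrite Nat.eqb_refl; [exact C_eta|].
    rewrite (proj2 (Nat.eqb_neq b a) (not_eq_sym a_neq_b)); exact C_theta.
  - exact C_bot.
  - exact C_top.
  - exact (C_neg _ (IHg Hl)).
  - exact (C_or _ _ (IHg Hl) (C_neg _ (IHg Hl))).
  - exact (C_and _ _ (IHg (proj1 Hl)) (IHh (proj2 Hl))).
  - exact (C_or _ _ (IHg (proj1 Hl)) (IHh (proj2 Hl))).
  - exact (C_tensor _ _ (IHg (proj1 Hl)) (IHh (proj2 Hl))).
Qed.

End Substitution.

End SupportProperties.

Inductive world := w0 | w1 | w2.

Definition val (w : world) (p : nat) : Prop :=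
  match w with
  | w0 => p = 0 \/ p = 1
  | w1 => p = 0
  | w2 => p = 1 \/ p = 2
  end.

Definition model3 : model := {| W := world; V := val |}.

Definition eta0 : form := Or (Var 0) (Var 1).
Definition theta0 : form := Or (Var 0) (Var 2).

Inductive level := LBot | LTheta | LEta | LTop.

Definition height (l : level) : nat :=
  match l with LBot => 0 | LTheta => 1 | LEta => 2 | LTop => 3 end.

Definition level_prop (l : level) : state model3 -> Prop :=
  match l with
  | LBot => is_empty
  | LTheta => fun s => supp model3 s theta0
  | LEta => fun s => supp model3 s eta0
  | LTop => fun _ => True
  end.

Lemma supp_theta0_eta0 (s : state model3) :
  supp model3 s theta0 -> supp model3 s eta0.
Proof.
  intros [H|H]; [left; exact H|right].
  intros w Hw; specialize (H w Hw); destruct w; simpl in *; lia.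
Qed.

Lemma level_prop_monotone (l1 l2 : level) (s : state model3) :
  height l1 <= height l2 -> level_prop l1 s -> level_prop l2 s.
Proof.
  destruct l1, l2; cbn [level_prop height]; intros Hle Hs; try lia;
    auto using supp_theta0_eta0; left; intros w Hw; destruct (Hs w Hw).
Qed.

Lemma level_prop_persistent (l : level) : persistent model3 (level_prop l).
Proof.
  destruct l; cbn [level_prop].
  - intros s t Hts Hs w Hw; exact (Hs w (Hts w Hw)).
  - apply supp_persistent.
  - apply supp_persistent.
  - intros s t _ _; exact I.
Qed.

Lemma level_prop_off_w2 (l : level) (t : state model3) :
  l <> LBot -> subst_of t (fun w => w <> w2) -> level_prop l t.
Proof.
  intros Hl Ht; destruct l; simpl; [congruence|left..|trivial];
    intros [] Hw; simpl; auto; destruct (Ht w2 Hw); reflexivity.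
Qed.

Lemma level_prop_at_w2 (l : level) (t : state model3) :
  l <> LBot -> subst_of t (fun w => w = w2) -> level_prop l t.
Proof.
  intros Hl Ht; destruct l; simpl; [congruence|right..|trivial];
    intros w Hw; rewrite (Ht w Hw); simpl; auto.
Qed.

Lemma level_prop_singleton (l : level) (w : world) :
  l <> LBot -> level_prop l (fun x => x = w).
Proof.
  intros Hl; destruct w; [apply level_prop_off_w2|apply level_prop_off_w2|apply level_prop_at_w2];
    auto; intros x ->; discriminate || reflexivity.
Qed.

Definition in_chain (P : state model3 -> Prop) : Prop :=
  exists l, same_support model3 P (level_prop l).

Lemma in_chain_same_support (P Q : state model3 -> Prop) :
  same_support model3 P Q -> in_chain P -> in_chain Q.
Proof.
  intros HPQ [l Hl]; exists l; intros s; rewrite <- (HPQ s); apply Hl.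
Qed.

Lemma in_chain_sem (l : level) : in_chain (level_prop l).
Proof. exists l; intros s; reflexivity. Qed.

Lemma in_chain_total (P Q : state model3 -> Prop) :
  in_chain P -> in_chain Q -> (forall s, P s -> Q s) \/ (forall s, Q s -> P s).
Proof.
  intros [l1 H1] [l2 H2].
  destruct (Nat.le_ge_cases (height l1) (height l2)); [left|right];
    intros s Hs; [apply H2|apply H1]; eapply level_prop_monotone;
    eauto; [apply H1|apply H2]; exact Hs.
Qed.

Lemma in_chain_neg (P : state model3 -> Prop) :
  in_chain P -> in_chain (neg_prop model3 P).
Proof.
  intros [l Hl]; apply (in_chain_same_support (neg_prop model3 (level_prop l))).
  { intros s; symmetry; apply (neg_prop_same_support _ _ _ Hl). }
  destruct l; [exists LTop|exists LBot..]; intros s;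
    [apply neg_prop_empty|apply neg_prop_of_singletons; intros w;
                          apply level_prop_singleton; discriminate..].
Qed.

Lemma level_eq_bot_or_not (l : level) : l = LBot \/ l <> LBot.
Proof. destruct l; [left; reflexivity|right; discriminate..]. Qed.

Lemma in_chain_tensor (P Q : state model3 -> Prop) :
  in_chain P -> in_chain Q -> in_chain (tensor_prop model3 P Q).
Proof.
  intros [l1 H1] [l2 H2].
  apply (in_chain_same_support (tensor_prop model3 (level_prop l1) (level_prop l2))).
  { intros s; symmetry; apply (tensor_prop_same_support _ _ _ _ _ H1 H2). }
  destruct (level_eq_bot_or_not l1) as [->|Hl1].
  { exists l2; apply tensor_prop_empty_l, level_prop_persistent. }
  destruct (level_eq_bot_or_not l2) as [->|Hl2].
  { exists l1; intros s; etransitivity;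
      [apply tensor_prop_comm|apply tensor_prop_empty_l, level_prop_persistent]. }
  exists LTop; apply (tensor_prop_cover model3 (fun w => w <> w2) (fun w => w = w2)).
  - intros []; [left; discriminate|left; discriminate|right; reflexivity].
  - intros t; apply level_prop_off_w2, Hl1.
  - intros t; apply level_prop_at_w2, Hl2.
Qed.

Lemma supp_imp_not_in_chain :
  ~ in_chain (fun s => supp_imp model3 s eta0 theta0).
Proof.
  intros [l Hl].
  assert (Himp_off_w0 : supp_imp model3 (fun w => w <> w0) eta0 theta0).
  { intros t Ht [Hp|Hq]; [left; exact Hp|right].
    intros w Hw; specialize (Hq w Hw); destruct w; simpl in *;
      [destruct (Ht w0 Hw); reflexivity|lia|auto]. }
  assert (Hnot_eta_off_w0 : ~ supp model3 (fun w => w <> w0) eta0).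
  { intros [H|H].
    - assert (Hw : val w2 0) by (apply H; discriminate); simpl in Hw; lia.
    - assert (Hw : val w1 1) by (apply H; discriminate); simpl in Hw; lia. }
  assert (Hnot_imp_full : ~ supp_imp model3 (fun _ => True) eta0 theta0).
  { intros H; destruct (H (fun w => w <> w1) (fun _ _ => I)) as [Hp|Hr].
    - right; intros [] Hw; simpl; auto; destruct (Hw eq_refl).
    - assert (Hw : val w2 0) by (apply Hp; discriminate); simpl in Hw; lia.
    - assert (Hw : val w0 2) by (apply Hr; discriminate); simpl in Hw; lia. }
  destruct (Nat.le_gt_cases (height l) (height LEta)) as [Hle|Hgt].
  - apply Hnot_eta_off_w0, (level_prop_monotone l LEta _ Hle), Hl, Himp_off_w0.
  - destruct l; simpl in Hgt; try lia.
    apply Hnot_imp_full, Hl; exact I.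
Qed.

Theorem theorem3 :
  forall (a b : nat), a <> b ->
  ~ (exists phi : form,
       letters_in a b phi /\
       forall eta theta : form,
         forall (M : model) (s : state M),
           supp M s (subst2 a b eta theta phi) <-> supp_imp M s eta theta).
Proof.
  intros a b Hab [phi [Hl Hphi]].
  apply supp_imp_not_in_chain.
  apply (in_chain_same_support (fun s => supp model3 s (subst2 a b eta0 theta0 phi))).
  { intros s; apply Hphi. }
  apply (supp_subst2_closed model3 a b eta0 theta0 Hab).
  - exact (in_chain_sem LEta).
  - exact (in_chain_sem LTheta).
  - exact (in_chain_sem LBot).
  - exact (in_chain_sem LTop).
  - exact in_chain_neg.
  - apply chain_closed_and; [exact in_chain_same_support|exact in_chain_total].
  - apply chain_closed_or; [exact in_chain_same_support|exact in_chain_total].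
  - exact in_chain_tensor.
  - exact Hl.
Qed.
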